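(* Let $\mathcal{F}$ and $\mathcal{L}$ be classes of simple graphs, where $\mathcal{L}$ is finite and its elements are pairwise non-isomorphic. Let $\alpha\colon\mathcal{L}\to\mathbb{R}\setminus\{0\}$. If for all simple graphs $G$ and $H$, \[ G\equiv_{\mathcal{F}}H \implies \sum_{L\in\mathcal{L}}\alpha_L\hom(L,G)=\sum_{L\in\mathcal{L}}\alpha_L\hom(L,H),\] then $\mathcal{L}\subseteq\mathrm{cl}(\mathcal{F})$.
   Context: All graphs are finite, undirected, without multiple edges; simple means without loops. $\hom(F,G)$ is the number of homomorphisms $F\to G$. $G\equiv_{\mathcal{F}}H$ means $\hom(F,G)=\hom(F,H)$ for all $F\in\mathcal{F}$. $\mathrm{cl}(\mathcal{F})$ is the class of all simple graphs $K$ such that for all simple graphs $G,H$, $G\equiv_{\mathcal{F}}H$ implies $\hom(K,G)=\hom(K,H)$. *)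

From mathcomp Require Import all_boot all_order all_algebra.
From mathcomp Require Import reals.
Set Implicit Arguments. Unset Strict Implicit. Unset Printing Implicit Defensive.

(* Every finite simple graph is isomorphic to one of these,
   and all notions below are isomorphism-invariant. *)
Record sgraph := SGraph {
  sg_n : nat;
  sg_adj : rel 'I_sg_n;
  sg_sym : symmetric sg_adj;
  sg_irr : irreflexive sg_adj }.

Definition homc (F G : sgraph) : nat :=
  #|[set f : {ffun 'I_(sg_n F) -> 'I_(sg_n G)} |
      [forall x, forall y, sg_adj x y ==> sg_adj (f x) (f y)]]|.

Definition isomorphic (F G : sgraph) : Prop :=
  exists f : 'I_(sg_n F) -> 'I_(sg_n G),
    bijective f /\ forall x y, sg_adj (f x) (f y) = sg_adj x y.

Definition hom_equiv (Fc : sgraph -> Prop) (G H : sgraph) : Prop :=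
  forall F, Fc F -> homc F G = homc F H.

Definition cl (Fc : sgraph -> Prop) (K : sgraph) : Prop :=
  forall G H, hom_equiv Fc G H -> homc K G = homc K H.

From mathcomp Require Import all_boot all_order all_algebra.
From mathcomp Require Import reals.
Import GRing.Theory Num.Theory.

(* If G ≡_F H then also G × K ≡_F H × K for every K, because hom(F, G × K) =
   hom(F, G) hom(F, K).  Hence c_L := α_L (hom(L, G) - hom(L, H)) satisfies
   Σ_L c_L hom(L, K) = 0 for every graph K, and it remains to see that the
   functions hom(L, -) of pairwise non-isomorphic graphs L are linearly
   independent (Lovász).  Counting homomorphisms into the induced subgraphs
   K[S] and inverting over S turns the relation into the same relation for
   the numbers of homomorphisms L -> K with image exactly U.  Evaluating at
   K = L_i, U = V(L_i), for an L_i with c_i != 0 having the most vertices and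
   then the fewest edges, kills every term but the one of L_i itself: a
   homomorphism from another such L_j onto V(L_i) would be bijective and
   edge-preserving with no more edges than L_i has, i.e. an isomorphism. *)

Section Homomorphisms.
Variable F : sgraph.

Definition is_hom {T : finType} (r : rel T) (f : {ffun 'I_(sg_n F) -> T}) : bool :=
  [forall x, forall y, sg_adj x y ==> r (f x) (f y)].

Definition homr {T : finType} (r : rel T) : nat := #|[set f | is_hom r f]|.

Definition homr_onto {T : finType} (r : rel T) (U : {set T}) : nat :=
  #|[set f | is_hom r f & f @: setT == U]|.

Lemma is_homP {T : finType} (r : rel T) (f : {ffun 'I_(sg_n F) -> T}) :
  reflect (forall x y, sg_adj x y -> r (f x) (f y)) (is_hom r f).
Proof.
apply: (iffP forallP) => [homf x y | homf x].
  by have /forallP/(_ y)/implyP := homf x.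
by apply/forallP => y; apply/implyP; apply: homf.
Qed.

Lemma homcE (G : sgraph) : homc F G = homr (@sg_adj G).
Proof. by []. Qed.

Lemma homr_iso {T T' : finType} (r : rel T) (r' : rel T') (g : T -> T') :
  bijective g -> (forall x y, r' (g x) (g y) = r x y) -> homr r' = homr r.
Proof.
move=> [h gK hK] gE.
pose post (f : {ffun 'I_(sg_n F) -> T}) := [ffun x => g (f x)].
have postK : cancel post (fun f' => [ffun x => h (f' x)]).
  by move=> f; apply/ffunP => x; rewrite !ffunE gK.
rewrite /homr -(card_imset _ (can_inj postK)); apply: eq_card => f'; rewrite inE.
apply/idP/imsetP => [/is_homP homf' | [f]].
- exists [ffun x => h (f' x)]; last by apply/ffunP => x; rewrite !ffunE hK.
  by rewrite inE; apply/is_homP => x y xy; rewrite !ffunE -gE !hK homf'.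
- by rewrite inE => /is_homP homf ->; apply/is_homP => x y xy; rewrite !ffunE gE homf.
Qed.

Definition prod_rel {T1 T2 : finType} (r1 : rel T1) (r2 : rel T2) : rel (T1 * T2) :=
  fun p q => r1 p.1 q.1 && r2 p.2 q.2.

Lemma homr_prod {T1 T2 : finType} (r1 : rel T1) (r2 : rel T2) :
  homr (prod_rel r1 r2) = homr r1 * homr r2.
Proof.
pose pair_fun (p : {ffun 'I_(sg_n F) -> T1} * {ffun 'I_(sg_n F) -> T2}) :=
  [ffun x => (p.1 x, p.2 x)].
have pair_inj : injective pair_fun.
  move=> [f1 f2] [g1 g2] /ffunP fg; congr pair; apply/ffunP => x;
  by have := fg x; rewrite !ffunE => -[].
rewrite /homr -cardsX -(card_imset _ pair_inj); apply: eq_card => f; rewrite inE.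
apply/idP/imsetP => [/is_homP homf | [[f1 f2]]].
- exists ([ffun x => (f x).1], [ffun x => (f x).2]).
    by rewrite in_setX !inE; apply/andP; split; apply/is_homP => x y /homf /andP[];
       rewrite !ffunE.
  by apply/ffunP => x; rewrite !ffunE; case: (f x).
- rewrite in_setX !inE => /andP[/is_homP hom1 /is_homP hom2] ->.
  by apply/is_homP => x y xy; rewrite /prod_rel !ffunE /= hom1 ?hom2.
Qed.

Definition sub_rel {T : finType} (r : rel T) (S : {set T}) : rel {x | x \in S} :=
  fun x y => r (val x) (val y).

Lemma homr_sub {T : finType} (r : rel T) (S : {set T}) :
  homr (sub_rel r S) = #|[set f | is_hom r f & f @: setT \subset S]|.
Proof.
pose val_fun (f : {ffun 'I_(sg_n F) -> {x | x \in S}}) := [ffun x => val (f x)].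
have val_inj : injective val_fun.
  by move=> f g /ffunP fg; apply/ffunP => x; apply: val_inj; have := fg x; rewrite !ffunE.
rewrite /homr -(card_imset _ val_inj); apply: eq_card => f; rewrite !inE.
apply/imsetP/andP => [[g] | [/is_homP homf /subsetP imS]].
- rewrite inE => /is_homP homg ->; split.
    by apply/is_homP => x y xy; rewrite !ffunE; apply: homg.
  by apply/subsetP => _ /imsetP[x _ ->]; rewrite ffunE; apply: valP.
- have fS x : f x \in S by apply/imS/imset_f; rewrite inE.
  exists [ffun x => exist _ (f x) (fS x)]; last by apply/ffunP => x; rewrite !ffunE.
  by rewrite inE; apply/is_homP => x y xy; rewrite /sub_rel !ffunE homf.
Qed.

Lemma card_hom_image_sub {T : finType} (r : rel T) (S : {set T}) :
  #|[set f | is_hom r f & f @: setT \subset S]| =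
  \sum_(U : {set T} | U \subset S) homr_onto r U.
Proof.
rewrite -[LHS]sum1_card (partition_big (fun f : {ffun _ -> T} => f @: setT) (fun U => U \subset S)).
  apply: eq_bigr => U sUS; rewrite /homr_onto -sum1_card; apply: eq_bigl => f.
  by rewrite !inE; case: eqP => [->|]; rewrite ?sUS ?andbT ?andbF.
by move=> f; rewrite inE => /andP[].
Qed.

Lemma homr_onto_card {T : finType} (r : rel T) (U : {set T}) :
  0 < homr_onto r U -> #|U| <= sg_n F.
Proof.
case/card_gt0P => f; rewrite inE => /andP[_ /eqP <-].
by rewrite (leq_trans (leq_imset_card _ _)) // cardsT card_ord.
Qed.

End Homomorphisms.

Definition graph_of_rel {T : finType} {r : rel T} (r_sym : symmetric r)
    (r_irr : irreflexive r) : sgraph :=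
  @SGraph #|T| (fun i j => r (enum_val i) (enum_val j))
    (fun i j => r_sym _ _) (fun i => r_irr _).

Lemma homc_graph_of_rel F (T : finType) (r : rel T) r_sym r_irr :
  homc F (@graph_of_rel T r r_sym r_irr) = homr F r.
Proof.
rewrite homcE; apply: (homr_iso _ _ _ _ (Bijective (@enum_rankK T) (@enum_valK T))).
by move=> x y /=; rewrite !enum_rankK.
Qed.

Lemma prod_rel_sym {T1 T2 : finType} {r1 : rel T1} {r2 : rel T2} :
  symmetric r1 -> symmetric r2 -> symmetric (prod_rel r1 r2).
Proof. by move=> sym1 sym2 p q; rewrite /prod_rel sym1 sym2. Qed.

Lemma prod_rel_irr {T1 T2 : finType} {r1 : rel T1} (r2 : rel T2) :
  irreflexive r1 -> irreflexive (prod_rel r1 r2).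
Proof. by move=> irr1 p; rewrite /prod_rel irr1. Qed.

Definition prod_graph (G K : sgraph) : sgraph :=
  graph_of_rel (prod_rel_sym (@sg_sym G) (@sg_sym K))
    (prod_rel_irr (@sg_adj K) (@sg_irr G)).

Lemma homc_prod F G K : homc F (prod_graph G K) = homc F G * homc F K.
Proof. by rewrite homc_graph_of_rel homr_prod. Qed.

Lemma hom_equiv_prod {Fc G H} K :
  hom_equiv Fc G H -> hom_equiv Fc (prod_graph G K) (prod_graph H K).
Proof. by move=> GH F FcF; rewrite !homc_prod GH. Qed.

Definition induced (G : sgraph) (S : {set 'I_(sg_n G)}) : sgraph :=
  @graph_of_rel _ (sub_rel (@sg_adj G) S)
    (fun x y => sg_sym (val x) (val y)) (fun x => sg_irr (val x)).

Lemma homc_induced F G S :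
  homc F (induced G S) = \sum_(U : {set _} | U \subset S) homr_onto F (@sg_adj G) U.
Proof. by rewrite homc_graph_of_rel homr_sub card_hom_image_sub. Qed.

Definition arcs (G : sgraph) : {set 'I_(sg_n G) * 'I_(sg_n G)} :=
  [set p | sg_adj p.1 p.2].

Lemma homr_onto_id G : 0 < homr_onto G (@sg_adj G) setT.
Proof.
apply/card_gt0P; exists [ffun x => x]; rewrite !inE; apply/andP; split.
  by apply/is_homP => x y; rewrite !ffunE.
by apply/eqP/setP => y; rewrite inE; apply/imsetP; exists y; rewrite ?inE ?ffunE.
Qed.

Lemma surj_card_bij (aT rT : finType) (f : aT -> rT) :
  f @: setT = setT -> #|aT| <= #|rT| -> bijective f.
Proof.
move=> fT le_aT_rT; have le_rT_aT : #|rT| <= #|aT|.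
  by rewrite -cardsT -fT (leq_trans (leq_imset_card _ _)) ?cardsT.
have /imset_injP finj : #|f @: setT| == #|[set: aT]|.
  by rewrite fT !cardsT eqn_leq le_aT_rT le_rT_aT.
by apply: inj_card_bij => // x y; apply: finj; rewrite inE.
Qed.

Lemma bij_hom_adjE F G (f : {ffun 'I_(sg_n F) -> 'I_(sg_n G)}) :
  bijective f -> is_hom F (@sg_adj G) f -> #|arcs G| <= #|arcs F| ->
  forall x y, sg_adj (f x) (f y) = sg_adj x y.
Proof.
move=> fbij /is_homP homf le_arcs x y; have finj := bij_inj fbij.
pose fpair (p : 'I_(sg_n F) * 'I_(sg_n F)) := (f p.1, f p.2).
have fpair_inj : injective fpair by move=> [x1 y1] [x2 y2] /= [/finj -> /finj ->].
have fpair_arcs : fpair @: arcs F = arcs G.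
  apply/eqP; rewrite eqEcard card_imset // le_arcs andbT.
  by apply/subsetP => _ /imsetP[p pF ->]; rewrite inE in pF; rewrite inE homf.
apply/idP/idP => [fxy | /homf //].
have : (f x, f y) \in arcs G by rewrite inE.
by rewrite -fpair_arcs => /imsetP[[x' y']]; rewrite inE => x'y' [/finj -> /finj ->].
Qed.

Lemma onto_iso {F G : sgraph} :
  sg_n F <= sg_n G -> #|arcs G| <= #|arcs F| ->
  0 < homr_onto F (@sg_adj G) setT -> isomorphic F G.
Proof.
move=> le_n le_arcs /card_gt0P[f]; rewrite inE => /andP[homf /eqP fT].
have fbij : bijective f by apply: surj_card_bij; rewrite ?card_ord.
by exists f; split; last exact: bij_hom_adjE.
Qed.

Lemma exists_maxn_then_minn {I : finType} (P : pred I) (a b : I -> nat) {i0} :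
  P i0 -> exists2 i, P i & forall j, P j -> a j <= a i /\ (a j = a i -> b i <= b j).
Proof.
move=> Pi0; case: (arg_maxnP a Pi0) => imax Pimax maxa.
have Pimax' : P imax && (a imax == a imax) by rewrite Pimax eqxx.
case: (@arg_minnP _ _ [pred j | P j && (a j == a imax)] b Pimax').
move=> i /andP[Pi /eqP ai] minb.
exists i => // j Pj; rewrite ai; split; first exact: maxa.
by move=> aj; apply: minb; rewrite inE Pj aj eqxx.
Qed.

Local Open Scope ring_scope.

Section HomIndependence.
Context {R : numDomainType} {k : nat} {L : 'I_k -> sgraph} {c : 'I_k -> R}.

Lemma hom_relation_onto :
  (forall K, \sum_(i < k) c i * (homc (L i) K)%:R = 0) ->
  forall K (U : {set 'I_(sg_n K)}),
    \sum_(i < k) c i * (homr_onto (L i) (@sg_adj K) U)%:R = 0.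
Proof.
move=> hom_rel K U.
elim: {U}#|U|.+1 {-2}U (ltnSn #|U|) => // m IH S ltSm.
have := hom_rel (induced K S).
under eq_bigr do rewrite homc_induced natr_sum mulr_sumr.
rewrite exchange_big (bigD1 S) //= [X in _ + X]big1 ?addr0 // => U /andP[sUS neqUS].
have ltUS : (#|U| < #|S|)%N by apply: proper_card; rewrite properEneq neqUS.
by apply: IH; exact: leq_trans ltUS ltSm.
Qed.

Hypothesis L_noniso : forall i j, isomorphic (L i) (L j) -> i = j.

Lemma onto_relation_trivial :
  (forall K (U : {set 'I_(sg_n K)}),
    \sum_(i < k) c i * (homr_onto (L i) (@sg_adj K) U)%:R = 0) ->
  forall i, c i = 0.
Proof.
move=> onto_rel i0; apply/eqP; apply: contraT => ci0.
have [i ci extremal] := exists_maxn_then_minn [pred j | c j != 0]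
  (fun j => sg_n (L j)) (fun j => #|arcs (L j)|) ci0.
have := onto_rel (L i) setT.
rewrite (bigD1 i) //= big1 ?addr0 => [/eqP | j neq_ji].
  by rewrite mulf_eq0 (negbTE ci) pnatr_eq0 gtn_eqF ?homr_onto_id.
have [-> | cj] := eqVneq (c j) 0; first by rewrite mul0r.
apply/eqP; rewrite mulf_eq0 pnatr_eq0; apply/orP; right.
apply: contraT; rewrite -lt0n => onto_ji.
have [le_n le_arcs] := extremal j cj.
have eq_n : sg_n (L j) = sg_n (L i).
  apply/eqP; rewrite eqn_leq le_n /=.
  by have := @homr_onto_card _ _ _ _ onto_ji; rewrite cardsT card_ord.
by move: neq_ji; rewrite (L_noniso _ _ (onto_iso le_n (le_arcs eq_n) onto_ji)) eqxx.
Qed.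

Lemma hom_relation_trivial :
  (forall K, \sum_(i < k) c i * (homc (L i) K)%:R = 0) -> forall i, c i = 0.
Proof. by move/hom_relation_onto/onto_relation_trivial. Qed.

End HomIndependence.

Theorem lemma6 (R : realType) (Fc : sgraph -> Prop) (k : nat)
  (L : 'I_k -> sgraph) (alpha : 'I_k -> R) :
  (forall i j : 'I_k, isomorphic (L i) (L j) -> i = j) ->
  (forall i : 'I_k, alpha i != 0) ->
  (forall G H : sgraph, hom_equiv Fc G H ->
     \sum_(i < k) alpha i * (homc (L i) G)%:R =
     \sum_(i < k) alpha i * (homc (L i) H)%:R) ->
  forall i : 'I_k, cl Fc (L i).
Proof.
move=> L_noniso alpha_neq0 alpha_rel i G H GH.
pose c j := alpha j * ((homc (L j) G)%:R - (homc (L j) H)%:R).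
have c_rel K : \sum_(j < k) c j * (homc (L j) K)%:R = 0.
  have := alpha_rel _ _ (hom_equiv_prod K GH).
  move/eqP; rewrite -subr_eq0 -sumrB => /eqP prod_eq; rewrite -[RHS]prod_eq.
  by apply: eq_bigr => j _; rewrite /c !homc_prod !natrM mulrBr mulrBl !mulrA.
have /eqP := hom_relation_trivial L_noniso c_rel i.
by rewrite mulf_eq0 (negbTE (alpha_neq0 i)) subr_eq0 eqr_nat => /eqP.
Qed.
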